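(* Let $P$ be a set of $n$ points in the plane in convex position, and let $S\subseteq P$ be a dominating set of the unit-disk graph $G(P)$. Then there exist a partition $\mathcal{A}$ of $P$ (into consecutive, nonempty, pairwise disjoint sublists) and a line-separable assignment $\phi:\mathcal{A}\rightarrow S$ such that for every center $p\in S$ we have $p\in G_p$, i.e., one of the sublists assigned to $p$ contains $p$.
   Context: $P$ is in convex position (every point of $P$ is a vertex of its convex hull), no three points of $P$ are collinear and no four lie on a common circle. $P$ is viewed as the cyclic list $\langle p_1,\dots,p_n\rangle$ ordered counterclockwise along the convex hull. A sublist is a contiguous subsequence of this cyclic list; sublists are consecutive if their concatenation is again a sublist. For a point $p$, $D_p$ is the closed disk of radius $1$ centered at $p$. The unit-disk graph $G(P)$ has vertex set $P$ and an edge between two points iff their Euclidean distance is at most $1$. A dominating set is a set $S\subseteq P$ such that every point of $P$ is in $S$ or adjacent to a point of $S$; points of $S$ are called centers. A partition $\mathcal{A}$ of $P$ is a partition of the cyclic list into consecutive, nonempty, pairwise disjoint sublists. An assignment $\phi:\mathcal{A}\to S$ maps each sublist $\alpha\in\mathcal{A}$ to exactly one center $p\in S$ with $\alpha\subseteq D_p$. The group $G_p$ of a center $p$ is the set of points in the sublists assigned to $p$. The assignment is line separable if for every two distinct centers $p,q$ there is a line $\ell$ such that the points of one of $G_p,G_q$ lie on one side of $\ell$ or on $\ell$, and the points of the other lie strictly on the other side of $\ell$. *)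

From HB Require Import structures.
From mathcomp Require Import all_boot all_order all_algebra.
Set Implicit Arguments. Unset Strict Implicit. Unset Printing Implicit Defensive.
Import Order.TTheory GRing.Theory Num.Theory.
Local Open Scope ring_scope.

Section Geometry.
Variable R : realFieldType.
Definition pt := (R * R)%type.

Definition dist2 (a b : pt) : R := (a.1 - b.1) ^+ 2 + (a.2 - b.2) ^+ 2.

(* orientation determinant: > 0 iff a, b, c make a left (ccw) turn *)
Definition orient (a b c : pt) : R :=
  (b.1 - a.1) * (c.2 - a.2) - (b.2 - a.2) * (c.1 - a.1).

Variable n : nat.
Variable p : 'I_n -> pt.

Definition convex_position : Prop :=
  forall i : 'I_n, ~ exists w : 'I_n -> R,
    [/\ forall j, 0 <= w j, w i = 0, \sum_j w j = 1 &
        (\sum_j w j * (p j).1, \sum_j w j * (p j).2) = p i].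

(* p_0, ..., p_{n-1} is the counterclockwise order along the hull:
   each p_i p_{i+1 mod n} is a hull edge with all other points strictly
   to its left *)
Definition ccw_hull_order : Prop :=
  forall i j : 'I_n, j != i -> j != ordS i -> 0 < orient (p i) (p (ordS i)) (p j).

Definition no_three_collinear : Prop :=
  forall i j k : 'I_n, i != j -> j != k -> i != k -> orient (p i) (p j) (p k) != 0.

Definition no_four_cocircular : Prop :=
  forall i j k l : 'I_n, uniq [:: i; j; k; l] ->
    ~ exists (o : pt) (r : R), 0 < r /\
      [/\ dist2 (p i) o = r, dist2 (p j) o = r, dist2 (p k) o = r & dist2 (p l) o = r].

Definition udg_adj (i j : 'I_n) : Prop := i != j /\ dist2 (p i) (p j) <= 1.

Definition dominating (S : {set 'I_n}) : Prop :=
  forall i : 'I_n, i \in S \/ exists2 j, j \in S & udg_adj i j.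

(* a sublist of the cyclic list: the [len] consecutive indices starting
   at [start], i.e. start, start+1, ..., start+len-1 (mod n) *)
Definition in_arc (start : 'I_n) (len : nat) (i : 'I_n) : bool :=
  ((i + n - start) %% n < len)%N.

Definition is_partition (k : nat) (start : 'I_k -> 'I_n) (len : 'I_k -> nat) : Prop :=
  (forall j, 0 < len j <= n)%N /\
  (forall i : 'I_n, exists! j : 'I_k, in_arc (start j) (len j) i).

Definition group_of (k : nat) (start : 'I_k -> 'I_n) (len : 'I_k -> nat)
  (phi : 'I_k -> 'I_n) (c : 'I_n) (i : 'I_n) : Prop :=
  exists2 j, phi j = c & in_arc (start j) (len j) i.

Definition weakly_strictly_separated (A B : 'I_n -> Prop) : Prop :=
  exists a b e : R, (a != 0 \/ b != 0) /\
    (forall i, A i -> a * (p i).1 + b * (p i).2 + e <= 0) /\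
    (forall i, B i -> 0 < a * (p i).1 + b * (p i).2 + e).

Definition line_separable (S : {set 'I_n}) (k : nat) (start : 'I_k -> 'I_n)
  (len : 'I_k -> nat) (phi : 'I_k -> 'I_n) : Prop :=
  forall c d, c \in S -> d \in S -> c != d ->
    weakly_strictly_separated (group_of start len phi c) (group_of start len phi d) \/
    weakly_strictly_separated (group_of start len phi d) (group_of start len phi c).

Definition is_assignment (S : {set 'I_n}) (k : nat) (start : 'I_k -> 'I_n)
  (len : 'I_k -> nat) (phi : 'I_k -> 'I_n) : Prop :=
  forall j, phi j \in S /\
    forall i, in_arc (start j) (len j) i -> dist2 (p i) (p (phi j)) <= 1.

End Geometry.

From mathcomp Require Import all_boot all_order all_algebra.
From mathcomp Require Import zify ring.
Set Implicit Arguments. Unset Strict Implicit. Unset Printing Implicit Defensive.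
Import Order.TTheory GRing.Theory Num.Theory.
Local Open Scope ring_scope.

(* Put every point in a singleton sublist and assign it to its nearest
   center, ties broken by smallest index.  Domination puts every point within
   distance 1 of some center, hence of its nearest one; a center is its own
   nearest center because the points are distinct; and the groups of two
   centers c, d lie on the two sides of the perpendicular bisector of cd, the
   tie-breaking rule making one side strict. *)

Lemma dist2xx (R : realFieldType) (a : pt R) : dist2 a a = 0.
Proof. by rewrite /dist2 !subrr expr0n addr0. Qed.

Lemma dist2_le0 (R : realFieldType) (a b : pt R) : (dist2 a b <= 0) = (a == b).
Proof.
rewrite /dist2 le_eqVlt ltNge addr_ge0 ?sqr_ge0 // orbF paddr_eq0 ?sqr_ge0 //.
by rewrite !sqrf_eq0 !subr_eq0 [RHS]xpair_eqE; case: a b => ? ? [? ?].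
Qed.

Lemma in_arc1 (n : nat) (start i : 'I_n) : in_arc start 1 i = (i == start).
Proof.
rewrite /in_arc ltnS leqn0 -val_eqE /=.
have := ltn_ord i; have := ltn_ord start.
case: (leqP start i) => [le_si | lt_is] lt_s lt_i.
- rewrite -addnBAC // modnDr modn_small; last lia.
  by apply/eqP/eqP; lia.
- by rewrite modn_small; [apply/eqP/eqP; lia | lia].
Qed.

Lemma singletons_partition (n : nat) : is_partition (@id 'I_n) (fun _ => 1%N).
Proof.
split=> [j | i]; first exact: leq_ltn_trans (ltn_ord j).
by exists i; split=> [|j]; rewrite /= in_arc1 // => /eqP.
Qed.

Lemma group_of_singletons (n : nat) (f : 'I_n -> 'I_n) (c i : 'I_n) :
  group_of id (fun _ => 1%N) f c i <-> f i = c.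
Proof.
split=> [[j <-] | <-]; last by exists i; rewrite //= in_arc1.
by rewrite /= in_arc1 => /eqP ->.
Qed.

Section Plane.
Variables (R : realFieldType) (n : nat) (p : 'I_n -> pt R).

Lemma convex_position_inj : convex_position p -> injective p.
Proof.
move=> hconv i j pij; case: (eqVneq i j) => // neq_ij; case: (hconv i).
exists (fun k => (k == j)%:R); split=> [k | | |]; rewrite ?ler0n ?(negbTE neq_ij) //.
  by rewrite (bigD1 j) //= eqxx big1 ?addr0 // => k /negbTE ->.
rewrite pij [RHS]surjective_pairing.
congr pair; rewrite (bigD1 j) //= eqxx mul1r big1 ?addr0 //;
  by move=> k /negbTE ->; rewrite mul0r.
Qed.

(* The separating line is the perpendicular bisector of ab. *)
Lemma bisector_separates (a b : pt R) (A B : 'I_n -> Prop) : a != b ->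
  (forall i, A i -> dist2 (p i) a <= dist2 (p i) b) ->
  (forall i, B i -> dist2 (p i) b < dist2 (p i) a) ->
  weakly_strictly_separated p A B.
Proof.
move=> neq_ab closer_a closer_b.
have normal : b.1 != a.1 \/ b.2 != a.2.
  case: a b neq_ab {closer_a closer_b} => a1 a2 [b1 b2] /= neq_ab.
  have [e1 | ] := eqVneq b1 a1; [right | by left].
  by apply: contraNneq neq_ab => ->; rewrite e1.
exists (2 * (b.1 - a.1)), (2 * (b.2 - a.2)), (a.1 ^+ 2 + a.2 ^+ 2 - b.1 ^+ 2 - b.2 ^+ 2).
have affine x : 2 * (b.1 - a.1) * x.1 + 2 * (b.2 - a.2) * x.2
    + (a.1 ^+ 2 + a.2 ^+ 2 - b.1 ^+ 2 - b.2 ^+ 2) = dist2 x a - dist2 x b.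
  by rewrite /dist2; ring.
split; first by rewrite !mulf_eq0 !pnatr_eq0 /= !subr_eq0.
by split=> i Hi; rewrite affine ?subr_le0 ?subr_gt0; auto.
Qed.

Variable S : {set 'I_n}.

Lemma dominating_center : dominating p S ->
  forall i, exists2 s, s \in S & dist2 (p i) (p s) <= 1.
Proof.
move=> dom i; case: (dom i) => [iS | [s sS [_ le1]]]; last by exists s.
by exists i; rewrite // dist2xx ler01.
Qed.

Section NearestCenter.
Hypothesis p_inj : injective p.
Hypothesis S_dom : dominating p S.

Definition center_key (i s : 'I_n) : R *l nat := (dist2 (p i) (p s), val s).

Definition nearest_center (i : 'I_n) : 'I_n :=
  if [pick s in S] is Some s0 then Order.arg_min s0 (mem S) (center_key i) else i.

Lemma nearest_centerP (i : 'I_n) :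
  nearest_center i \in S /\
  forall t, t \in S -> (center_key i (nearest_center i) <= center_key i t)%O.
Proof.
rewrite /nearest_center; case: pickP => [s0 s0S | noS]; last first.
  by have [s + _] := dominating_center S_dom i; rewrite noS.
by case: (arg_minP (center_key i) s0S) => s sS min_s; split=> // t /min_s.
Qed.

Lemma nearest_center_in (i : 'I_n) : nearest_center i \in S.
Proof. by case: (nearest_centerP i). Qed.

Lemma nearest_center_min (i t : 'I_n) : t \in S ->
  dist2 (p i) (p (nearest_center i)) <= dist2 (p i) (p t).
Proof. by case: (nearest_centerP i) => _ /[apply]; rewrite lexi_pair => /andP[]. Qed.

Lemma nearest_center_lt (i t : 'I_n) : t \in S -> (t < nearest_center i)%N ->
  dist2 (p i) (p (nearest_center i)) < dist2 (p i) (p t).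
Proof.
move=> tS lt_t; case: (nearest_centerP i) => _ /(_ t tS).
rewrite lexi_pair leEnat => /andP[le_dist tie].
by rewrite lt_leAnge le_dist; apply: contraL lt_t => /(implyP tie); rewrite -leqNgt.
Qed.

Lemma nearest_center_unit (i : 'I_n) : dist2 (p i) (p (nearest_center i)) <= 1.
Proof.
have [s sS le1] := dominating_center S_dom i.
exact: le_trans (nearest_center_min i sS) le1.
Qed.

Lemma nearest_center_id (c : 'I_n) : c \in S -> nearest_center c = c.
Proof.
move=> cS; apply: p_inj; apply/eqP; rewrite eq_sym -dist2_le0.
by rewrite -(dist2xx (p c)) nearest_center_min.
Qed.

Lemma nearest_center_assignment :
  is_assignment p S id (fun _ => 1%N) nearest_center.
Proof.
move=> j; split=> [|i]; first exact: nearest_center_in.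
by rewrite /= in_arc1 => /eqP ->; apply: nearest_center_unit.
Qed.

Lemma nearest_center_groups_separated (c d : 'I_n) :
  c \in S -> d \in S -> (c < d)%N ->
  weakly_strictly_separated p (group_of id (fun _ => 1%N) nearest_center c)
                              (group_of id (fun _ => 1%N) nearest_center d).
Proof.
move=> cS dS lt_cd; apply: (@bisector_separates (p c) (p d)).
- by apply: contraTneq lt_cd => /p_inj ->; rewrite ltnn.
- by move=> i /group_of_singletons <-; apply: nearest_center_min.
- by move=> i /group_of_singletons e; rewrite -{1}e nearest_center_lt // e.
Qed.

Lemma nearest_center_line_separable :
  line_separable p S id (fun _ => 1%N) nearest_center.
Proof.
move=> c d cS dS; rewrite -val_eqE neq_ltn => /orP[lt_cd | lt_dc].
- by left; apply: nearest_center_groups_separated.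
- by right; apply: nearest_center_groups_separated.
Qed.

End NearestCenter.
End Plane.

Theorem lemma1 (R : realFieldType) (n : nat) (p : 'I_n -> pt R)
  (Hconv : convex_position p) (Hccw : ccw_hull_order p)
  (Hcol : no_three_collinear p) (Hcirc : no_four_cocircular p)
  (S : {set 'I_n}) (HS : dominating p S) :
  exists (k : nat) (start : 'I_k -> 'I_n) (len : 'I_k -> nat) (phi : 'I_k -> 'I_n),
    [/\ is_partition start len,
        is_assignment p S start len phi,
        line_separable p S start len phi &
        forall c, c \in S -> exists j, phi j = c /\ in_arc (start j) (len j) c].
Proof.
have p_inj := convex_position_inj Hconv.
exists n, id, (fun _ => 1%N), (nearest_center p S).
split.
- exact: singletons_partition.
- exact: nearest_center_assignment.
- exact: nearest_center_line_separable.
- by move=> c cS; exists c; rewrite nearest_center_id //= in_arc1.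
Qed.
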